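(* Let $\mathbb{K}$ be a field, $R=\mathbb{K}\langle x,y\rangle/(xy-1)$, and let $I=\langle 1-yx\rangle$ be the socle of $R$. Let $H=\Sigma\oplus Rp(x)$ be a left ideal of $R$, where $p(x)\in\mathbb{K}[x]$ and $\Sigma\subseteq I$ is a left ideal. If $p(x)\neq 0$, then $H$ is finitely generated as a left $R$-module and $\Sigma$ has finite length. In particular, every left ideal of $R$ is either semisimple or finitely generated.
   Context: $R$ has $\mathbb{K}$-basis $\{y^ix^j: i,j\ge 0\}$; $I=\bigoplus_{n\ge1}Rf_n$ with $f_n=y^{n-1}x^{n-1}-y^nx^n$, each $Rf_n$ a simple left module isomorphic to $Rf_1$. *)

From HB Require Import structures.
From mathcomp Require Import all_boot all_algebra.
Set Implicit Arguments. Unset Strict Implicit. Unset Printing Implicit Defensive.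
Import GRing.Theory.
Local Open Scope ring_scope.

Section Jacobson.
Variables (K : fieldType) (R : algType K).

Definition jacobson_basis (x y : R) : Prop :=
  (forall r : R, exists (n : nat) (c : nat -> nat -> K),
      r = \sum_(i < n) \sum_(j < n) c i j *: (y ^+ i * x ^+ j)) /\
  (forall (n : nat) (c : nat -> nat -> K),
      \sum_(i < n) \sum_(j < n) c i j *: (y ^+ i * x ^+ j) = 0 ->
      forall i j, (i < n)%N -> (j < n)%N -> c i j = 0).

Definition subsetR (A B : R -> Prop) : Prop := forall a, A a -> B a.
Definition eqsetR (A B : R -> Prop) : Prop := forall a, A a <-> B a.
Definition zeroset : R -> Prop := fun a => a = 0.

Definition is_left_ideal (M : R -> Prop) : Prop :=
  M 0 /\ (forall a b, M a -> M b -> M (a + b)) /\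
  (forall r a, M a -> M (r * a)).

Definition idealI (x y : R) : R -> Prop := fun r =>
  exists (n : nat) (a b : 'I_n -> R),
    r = \sum_(k < n) a k * (1 - y * x) * b k.

Definition peval (p : {poly K}) (x : R) : R := (map_poly (in_alg R) p).[x].
Definition principal (a : R) : R -> Prop := fun h => exists r, h = r * a.

Definition sumset (A B : R -> Prop) : R -> Prop :=
  fun h => exists a b, A a /\ B b /\ h = a + b.

Definition fin_gen (M : R -> Prop) : Prop :=
  exists (n : nat) (g : 'I_n -> R), (forall i, M (g i)) /\
    forall m, M m -> exists c : 'I_n -> R, m = \sum_(i < n) c i * g i.

Definition simple_lsub (S : R -> Prop) : Prop :=
  is_left_ideal S /\ (exists s, S s /\ s <> 0) /\
  forall T, is_left_ideal T -> subsetR T S -> eqsetR T zeroset \/ eqsetR T S.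

(* Finite length: existence of a composition series
   0 = C_0 < C_1 < ... < C_n = M with simple successive quotients. *)
Definition finite_length (M : R -> Prop) : Prop :=
  exists (n : nat) (C : nat -> R -> Prop),
    eqsetR (C 0%N) zeroset /\ eqsetR (C n) M /\
    (forall i, is_left_ideal (C i)) /\
    forall i, (i < n)%N ->
      subsetR (C i) (C i.+1) /\ ~ eqsetR (C i) (C i.+1) /\
      forall T, is_left_ideal T -> subsetR (C i) T -> subsetR T (C i.+1) ->
        eqsetR T (C i) \/ eqsetR T (C i.+1).

Definition semisimple (M : R -> Prop) : Prop :=
  forall m, M m -> exists (n : nat) (S : 'I_n -> R -> Prop) (s : 'I_n -> R),
    (forall i, simple_lsub (S i) /\ subsetR (S i) M /\ S i (s i)) /\
    m = \sum_(i < n) s i.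

End Jacobson.

(* With e := 1 - y x one has x e = 0 = e y, and every t equals
   y^M x^M t + sum_(i < M) y^i e x^i t.  Spanning by the y^i x^j puts x^M t in K[x]
   for M large and e x^i t in e K[x], so a left ideal is controlled by its elements
   of the forms q(x) and e q(x).  If it contains p(x) with p <> 0, the q with q(x)
   (resp. e q(x)) in the ideal form a subspace that is finitely spanned modulo p,
   since remainders mod p live in a finite-dimensional space; this gives finite
   generation.  From e K[x] e = K e every nonzero R e t is simple, so an ideal
   without nonzero p(x) is a sum of such simple modules, and an ideal Sigma inside
   <1 - y x> with Sigma /\ R p(x) = 0 is generated by finitely many e q(x) (the
   elements q(x) of <1 - y x> vanish), hence has a composition series. *)

From HB Require Import structures.
From mathcomp Require Import all_boot all_algebra.
From Stdlib Require Import Classical FunctionalExtensionality PropExtensionality.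
Set Implicit Arguments. Unset Strict Implicit. Unset Printing Implicit Defensive.
Import GRing.Theory.
Local Open Scope ring_scope.

Section LeftIdeals.
Variables (K : fieldType) (R : algType K).
Implicit Types (A B L T : R -> Prop) (s : seq R).

Lemma eqsetRP A B : eqsetR A B <-> A = B.
Proof.
split=> [AB | -> a //]; apply: functional_extensionality => a.
exact: propositional_extensionality.
Qed.

Section Closure.
Variables (L : R -> Prop) (hL : is_left_ideal L).

Lemma lideal0 : L 0.
Proof. by case: hL. Qed.

Lemma lidealD a b : L a -> L b -> L (a + b).
Proof. by case: hL => _ [hD _]; apply: hD. Qed.

Lemma lidealMl r a : L a -> L (r * a).
Proof. by case: hL => _ [_ hM]; apply: hM. Qed.

Lemma lidealZ (c : K) a : L a -> L (c *: a).
Proof. by rewrite -mulr_algl; apply: lidealMl. Qed.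

Lemma lidealB a b : L a -> L b -> L (a - b).
Proof. by move=> La Lb; rewrite -mulN1r; apply/lidealD/lidealMl. Qed.

Lemma lideal_sum (I : Type) (r : seq I) (P : pred I) (F : I -> R) :
  (forall i, P i -> L (F i)) -> L (\sum_(i <- r | P i) F i).
Proof. by move=> LF; elim/big_ind: _ => //; [exact: lideal0 | exact: lidealD]. Qed.

End Closure.

Lemma lidealI A B : is_left_ideal A -> is_left_ideal B ->
  is_left_ideal (fun z => A z /\ B z).
Proof.
move=> hA hB; split; first by split; apply: lideal0.
split=> [a b [Aa Ba] [Ab Bb] | r a [Aa Ba]]; split.
- exact: lidealD.
- exact: lidealD.
- exact: lidealMl.
- exact: lidealMl.
Qed.

Lemma principal_lideal u : is_left_ideal (@principal K R u).
Proof.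
split; first by exists 0; rewrite mul0r.
split; first by move=> _ _ [a ->] [b ->]; exists (a + b); rewrite mulrDl.
by move=> r _ [a ->]; exists (r * a); rewrite mulrA.
Qed.

Lemma principal_sub L u : is_left_ideal L -> L u -> subsetR (principal u) L.
Proof. by move=> hL Lu _ [r ->]; apply: lidealMl. Qed.

Lemma sumset_lideal A B : is_left_ideal A -> is_left_ideal B ->
  is_left_ideal (sumset A B).
Proof.
move=> hA hB; split.
  by exists 0, 0; split; [exact: lideal0 | split; [exact: lideal0 | rewrite addr0]].
split=> [_ _ [a1 [b1 [A1 [B1 ->]]]] [a2 [b2 [A2 [B2 ->]]]] | r _ [a [b [Aa [Bb ->]]]]].
  exists (a1 + a2), (b1 + b2); split; first exact: lidealD.
  by split; [exact: lidealD | rewrite addrACA].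
exists (r * a), (r * b); split; first exact: lidealMl.
by split; [exact: lidealMl | rewrite mulrDr].
Qed.

Fixpoint lspan s : R -> Prop :=
  if s is g :: s' then fun m => exists r a, lspan s' a /\ m = r * g + a
  else @zeroset K R.

Lemma lspan_lideal s : is_left_ideal (lspan s).
Proof.
elim: s => [|g s IH] /=.
  by split=> //; split=> [a b -> -> | r a ->]; rewrite ?addr0 ?mulr0.
split; first by exists 0, 0; rewrite mul0r addr0; split; first exact: lideal0.
split=> [_ _ [r1 [a1 [h1 ->]]] [r2 [a2 [h2 ->]]] | r _ [r1 [a1 [h1 ->]]]].
  exists (r1 + r2), (a1 + a2); split; first exact: lidealD.
  by rewrite mulrDl addrACA.
exists (r * r1), (r * a1); split; first exact: lidealMl.
by rewrite mulrDr mulrA.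
Qed.

Lemma lspan_cons_sub g s : subsetR (lspan s) (lspan (g :: s)).
Proof. by move=> a Sa; exists 0, a; rewrite mul0r add0r. Qed.

Lemma lspan_mem s g : g \in s -> lspan s g.
Proof.
elim: s => // h s IH; rewrite inE => /orP[/eqP -> | /IH]; last exact: lspan_cons_sub.
by exists 1, 0; rewrite mul1r addr0; split; first exact: lideal0 (lspan_lideal s).
Qed.

Lemma lspan_min L s : is_left_ideal L -> (forall g, g \in s -> L g) ->
  subsetR (lspan s) L.
Proof.
move=> hL; elim: s => [|g s IH] sL m /=; first by move=> ->; exact: lideal0.
move=> [r [a [Sa ->]]]; apply: (lidealD hL).
  by apply: (lidealMl hL); apply/sL/mem_head.
by apply: IH Sa => h hs; apply: sL; rewrite inE hs orbT.
Qed.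

Lemma lspan_coef s m :
  lspan s m -> exists c : nat -> R, m = \sum_(i < size s) c i * s`_i.
Proof.
elim: s m => [|g s IH] m /=; first by move=> ->; exists (fun _ => 0); rewrite big_ord0.
move=> [r [a [/IH [c ->] ->]]]; exists (fun i => if i is j.+1 then c j else r).
by rewrite big_ord_recl.
Qed.

Lemma fin_gen_lspan L s :
  (forall g, g \in s -> L g) -> subsetR L (lspan s) -> fin_gen L.
Proof.
move=> sL Ls; exists (size s), (fun i => s`_i); split=> [i | m /Ls /lspan_coef [c ->]].
  exact/sL/mem_nth.
by exists (fun i => c i).
Qed.

Definition simple_generators s : Prop :=
  forall g, g \in s -> g != 0 -> simple_lsub (principal g).

Lemma simple_generators_cons g s :
  simple_generators (g :: s) -> simple_generators s.
Proof. by move=> gs h hs; apply: gs; rewrite inE hs orbT. Qed.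

Lemma finite_length_extend A B : finite_length A -> is_left_ideal B ->
  subsetR A B -> ~ eqsetR A B ->
  (forall T, is_left_ideal T -> subsetR A T -> subsetR T B -> eqsetR T A \/ eqsetR T B) ->
  finite_length B.
Proof.
move=> [n [C [C0 [/eqsetRP Cn [Cid Cstep]]]]] hB AB nAB ABmax; subst A.
exists n.+1, (fun i => if (i <= n)%N then C i else B).
rewrite leq0n ltnn; do 2!split=> //; split=> [i | i]; first by case: ifP.
rewrite ltnS; case: ltngtP => // [lt_in _ | -> _]; last by [].
exact: Cstep.
Qed.

Lemma lspan_cons_maximal g s T : simple_lsub (principal g) -> is_left_ideal T ->
  subsetR (lspan s) T -> subsetR T (lspan (g :: s)) ->
  eqsetR T (lspan s) \/ eqsetR T (lspan (g :: s)).
Proof.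
move=> [_ [_ gmin]] hT sT Tgs.
have hTg := lidealI hT (principal_lideal g).
case: (gmin _ hTg (fun _ => snd)) => [Tg0 | Tgg]; [left | right] => m; split=> //.
- move=> Tm; have [r [a [Sa mE]]] := Tgs m Tm.
  suff /Tg0 rg0 : T (r * g) /\ principal g (r * g) by rewrite mE rg0 add0r.
  split; last by exists r.
  have -> : r * g = m - a by rewrite mE addrK.
  exact: (lidealB hT Tm (sT a Sa)).
- exact: sT.
- exact: Tgs.
- move=> [r [a [Sa ->]]]; apply: (lidealD hT); last exact: sT.
  by have [] := (Tgg (r * g)).2 (ex_intro _ r erefl).
Qed.

Lemma finite_length_lspan s : simple_generators s -> finite_length (lspan s).
Proof.
elim: s => [|g s IH] gs.
  exists 0%N, (fun _ => lspan [::]).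
  by do 2!split=> //; split=> // _; exact: lspan_lideal.
have sub_gs := @lspan_cons_sub g s.
have [Sg | nSg] := classic (lspan s g).
  suff <- : lspan s = lspan (g :: s) by exact/IH/simple_generators_cons/gs.
  apply/eqsetRP => m; split=> [/sub_gs // |]; apply: lspan_min (lspan_lideal s) _ m.
  by move=> h; rewrite inE => /orP[/eqP -> // | hs]; exact: lspan_mem.
apply: finite_length_extend (lspan_lideal _) sub_gs _ _.
- exact/IH/simple_generators_cons/gs.
- by move=> eq_s; apply/nSg/(eq_s g)/lspan_mem/mem_head.
- move=> T hT sT Tgs; apply: lspan_cons_maximal hT sT Tgs; apply: gs (mem_head _ _) _.
  by apply: contra_notN nSg => /eqP ->; exact: lideal0 (lspan_lideal s).
Qed.

Lemma semisimple_lspan s : simple_generators s -> semisimple (lspan s).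
Proof.
elim: s => [|g s IH] gs m.
  move=> ->; exists 0%N, (fun _ => @zeroset K R), (fun _ => 0).
  by split; [case | rewrite big_ord0].
move=> [r [a [Sa ->]]].
have [n [S [t [St ->]]]] := IH (simple_generators_cons gs) a Sa.
have St' i : simple_lsub (S i) /\ subsetR (S i) (lspan (g :: s)) /\ S i (t i).
  have [Si [sS Sti]] := St i; split=> //; split=> // b /sS; exact: lspan_cons_sub.
have [g0 | g0] := eqVneq g 0; first by exists n, S, t; split=> //; rewrite g0 mulr0 add0r.
exists n.+1, (fun i => if unlift ord0 i is Some j then S j else principal g).
exists (fun i => if unlift ord0 i is Some j then t j else r * g); split.
  move=> i; case: (unlift ord0 i) => [j | ]; first exact: St'.
  split; first by apply: gs g0; exact: mem_head.
  by split; [apply: principal_sub (lspan_lideal _) _; exact/lspan_mem/mem_head | exists r].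
by rewrite big_ord_recl unlift_none; congr (_ + _); apply: eq_bigr => i _; rewrite liftK.
Qed.

End LeftIdeals.

Section Subspaces.
Variable K : fieldType.

Definition is_subspace (V : lmodType K) (W : V -> Prop) : Prop :=
  (forall u v, W u -> W v -> W (u + v)) /\ (forall c u, W u -> W (c *: u)).

Fixpoint kspan (V : lmodType K) (s : seq V) : V -> Prop :=
  if s is g :: s' then fun v => exists c w, kspan s' w /\ v = c *: g + w
  else fun v => v = 0.

Lemma subspace_fin_span_modp (p : {poly K}) d (W : {poly K} -> Prop) : is_subspace W ->
  (forall w, W w -> (size (w %% p)%R <= d)%N) ->
  exists ws, (forall w, w \in ws -> W w) /\
    forall w, W w -> exists v r, kspan ws v /\ w = v + r * p.
Proof.
elim: d W => [|d IH] W [WD WZ] Wsize.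
  exists [::]; split=> // w /Wsize; rewrite leqn0 size_poly_eq0 => /eqP wp0.
  by exists 0, (w %/ p); rewrite add0r {1}(divp_eq w p) wp0 addr0.
pose Wd w := W w /\ (size (w %% p)%R <= d)%N.
have Wd_sub : is_subspace Wd.
  split=> [u v [Wu su] [Wv sv] | c u [Wu su]]; split; [exact: WD | | exact: WZ |].
    by rewrite modpD (leq_trans (size_polyD _ _)) // geq_max su sv.
  by rewrite modpZl (leq_trans (size_scale_leq _ _)).
have [ws [wsW wsspan]] := IH Wd Wd_sub (fun w => snd).
have [[w0 [Ww0 w0big]] | Wsmall] := classic (exists w0, W w0 /\ ~~ (size (w0 %% p)%R <= d)%N).
  have w0d : (w0 %% p)`_d != 0.
    have sw0 : size (w0 %% p) = d.+1 by apply/eqP; rewrite eqn_leq Wsize // ltnNge.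
    by rewrite -[d]/(d.+1.-1) -sw0 -lead_coefE lead_coef_eq0 -size_poly_eq0 sw0.
  exists (w0 :: ws); split=> [w | w Ww].
    by rewrite inE => /orP[/eqP -> // | /wsW []].
  pose a := (w %% p)`_d / (w0 %% p)`_d.
  have Wdw : Wd (w - a *: w0).
    split; first by rewrite -scaleNr; apply/WD/WZ.
    apply/leq_sizeP => j; rewrite modpD modpN modpZl leq_eqVlt => /orP[/eqP <- | dj].
      by rewrite coefB coefZ /a divfK // subrr.
    have /leq_sizeP w_d1 := Wsize w Ww; have /leq_sizeP w0_d1 := Wsize w0 Ww0.
    by rewrite coefB coefZ w_d1 // w0_d1 // mulr0 subr0.
  have [v [r [vspan wE]]] := wsspan _ Wdw.
  exists (a *: w0 + v), r; split; first by exists a, v.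
  by rewrite -addrA -wE addrC subrK.
exists ws; split=> [w /wsW [] // | w Ww]; apply: wsspan; split=> //.
by apply/negPn/negP => wbig; apply: Wsmall; exists w.
Qed.

Section LinearImage.
Variables (V : lmodType K) (R : algType K) (f : V -> R).
Hypotheses (fD : {morph f : a b / a + b}) (fZ : scalable f).

Lemma is_subspace_preimage (L : R -> Prop) : is_left_ideal L ->
  is_subspace (fun v => L (f v)).
Proof.
move=> hL; split=> [u v Lu Lv | c u Lu]; first by rewrite fD; exact: lidealD.
by rewrite fZ; exact: lidealZ.
Qed.

Lemma kspan_image (L : R -> Prop) s v : is_left_ideal L ->
  (forall g, g \in s -> L (f g)) -> kspan s v -> L (f v).
Proof.
move=> hL; elim: s v => [|g s IH] v sL /=.
  by move=> ->; rewrite -(scale0r 0) fZ scale0r; exact: lideal0.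
move=> [c [w [ws ->]]]; rewrite fD fZ; apply: (lidealD hL).
  exact/(lidealZ hL)/sL/mem_head.
by apply: IH ws => h hs; apply: sL; rewrite inE hs orbT.
Qed.

End LinearImage.
End Subspaces.

Lemma pevalE (K : fieldType) (R : algType K) (p : {poly K}) (x : R) :
  peval p x = horner_alg x p.
Proof. by []. Qed.

Section Jacobson.
Variables (K : fieldType) (R : algType K) (x y : R).
Hypothesis xy1 : x * y = 1.
Hypothesis spanning : forall r : R, exists (n : nat) (c : nat -> nat -> K),
  r = \sum_(i < n) \sum_(j < n) c i j *: (y ^+ i * x ^+ j).

Local Notation e := (1 - y * x).
Local Notation hx := (horner_alg x).

Lemma mulx_e : x * e = 0.
Proof. by rewrite mulrBr mulr1 mulrA xy1 mul1r subrr. Qed.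

Lemma mule_expyS n : e * y ^+ n.+1 = 0.
Proof. by rewrite exprS mulrA mulrBl mul1r -mulrA xy1 mulr1 subrr mul0r. Qed.

Lemma mule_e : e * e = e.
Proof. by rewrite [in LHS]mulrBl mul1r -mulrA mulx_e mulr0 subr0. Qed.

Lemma expx_mul_expy n i : (i <= n)%N -> x ^+ n * y ^+ i = x ^+ (n - i).
Proof.
elim: i n => [|i IH] n le_in; first by rewrite mulr1 subn0.
case: n le_in => [//|n] le_in.
by rewrite [x ^+ _]exprSr [y ^+ _]exprS -mulrA (mulrA x) xy1 mul1r subSS IH.
Qed.

Lemma horner_additive : {morph hx : a b / a + b}.
Proof. exact: rmorphD. Qed.

Lemma horner_scalable : scalable hx.
Proof. by move=> c a; rewrite linearZ /= mulr_algl. Qed.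

Lemma horner_mul_e q : hx q * e = q`_0 *: e.
Proof.
elim/poly_ind: q => [|q c IH]; first by rewrite rmorph0 mul0r coef0 scale0r.
rewrite rmorphD rmorphM /= horner_algX horner_algC mulrDl -mulrA mulx_e mulr0.
by rewrite add0r coefD coefMX coefC /= add0r mulr_algl.
Qed.

Lemma expx_mul_horner a : exists M q, x ^+ M * a = hx q.
Proof.
have [n [c ->]] := spanning a; exists n.
exists (\sum_(i < n) \sum_(j < n) c i j *: 'X^(n - i + j)).
rewrite linear_sum mulr_sumr; apply: eq_bigr => i _.
rewrite linear_sum mulr_sumr; apply: eq_bigr => j _.
rewrite linearZ rmorphXn /= horner_algX -scalerAr mulrA.
by rewrite expx_mul_expy ?(ltnW (ltn_ord i)) // -exprD mulr_algl.
Qed.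

Lemma mule_horner t : exists q, e * t = e * hx q.
Proof.
have [n [c ->]] := spanning t.
exists (\sum_(i < n) \sum_(j < n) (if i == 0%N :> nat then c i j else 0) *: 'X^j).
rewrite linear_sum !mulr_sumr; apply: eq_bigr => -[[|i] lt_in] _ /=.
  rewrite linear_sum !mulr_sumr; apply: eq_bigr => j _.
  by rewrite linearZ rmorphXn /= horner_algX expr0 mul1r mulr_algl.
rewrite linear_sum !mulr_sumr; apply: eq_bigr => j _.
by rewrite scale0r linear0 mulr0 -scalerAr mulrA mule_expyS mul0r scaler0.
Qed.

Lemma mule_horner_additive : {morph (fun q => e * hx q) : a b / a + b}.
Proof. by move=> a b; rewrite /= rmorphD mulrDr. Qed.

Lemma mule_horner_scalable : scalable (fun q => e * hx q).
Proof. by move=> c a; rewrite /= horner_scalable scalerAr. Qed.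

Lemma mule_mul_e a : exists c : K, e * a * e = c *: e.
Proof.
have [q ->] := mule_horner a; exists q`_0.
by rewrite -mulrA horner_mul_e -scalerAr mule_e.
Qed.

Lemma decompose_expx M t :
  t = y ^+ M * (x ^+ M * t) + \sum_(i < M) y ^+ i * (e * (x ^+ i * t)).
Proof.
elim: M => [|M IH]; first by rewrite big_ord0 addr0 !expr0 !mul1r.
rewrite big_ord_recr /= {1}IH addrC addrA; congr (_ + _).
rewrite addrC [y ^+ M.+1]exprSr [x ^+ M.+1]exprS -!mulrA -mulrDr; congr (_ * _).
by rewrite mulrBl mul1r [y * (x * _)]mulrA subrK.
Qed.

Lemma lideal_sub_horner_parts (L G : R -> Prop) :
  is_left_ideal L -> is_left_ideal G ->
  (forall q, L (hx q) -> G (hx q)) -> (forall q, L (e * hx q) -> G (e * hx q)) ->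
  subsetR L G.
Proof.
move=> hL hG LGx LGe m Lm; have [M [q xMm]] := expx_mul_horner m.
rewrite (decompose_expx M m); apply: (lidealD hG).
  by apply/(lidealMl hG); rewrite xMm; apply: LGx; rewrite -xMm; exact: lidealMl.
apply: (lideal_sum hG) => i _; apply: (lidealMl hG).
have [q' eq'] := mule_horner (x ^+ i * m); rewrite eq'; apply: LGe.
by rewrite -eq'; do 2!apply: (lidealMl hL).
Qed.

Lemma idealI_expx s : idealI x y s -> exists N, x ^+ N * s = 0.
Proof.
move=> [n [a [b ->]]]; elim/big_ind: _ => [|s1 s2 [N1 xs1] [N2 xs2] | k _].
- by exists 0%N; rewrite mulr0.
- exists (N1 + N2)%N.
  by rewrite mulrDr {1}addnC !exprD -!mulrA xs1 xs2 !mulr0 addr0.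
- have [M [q xMa]] := expx_mul_horner (a k); exists M.+1.
  rewrite exprS -!mulrA [x ^+ M * _]mulrA [x ^+ M * _ * _]mulrA xMa horner_mul_e.
  by rewrite -scalerAl -scalerAr mulrA mulx_e mul0r scaler0.
Qed.

Lemma horner_idealI_eq0 q : idealI x y (hx q) -> hx q = 0.
Proof.
move=> /idealI_expx [N xNq].
have comm_xN : hx q * x ^+ N = x ^+ N * hx q.
  have -> : x ^+ N = hx 'X^N by rewrite rmorphXn /= horner_algX.
  by rewrite -!rmorphM mulrC.
(* x^N is right-cancellable on K[x], which is commutative, since x^N y^N = 1. *)
have xNyN : x ^+ N * y ^+ N = 1 by rewrite expx_mul_expy // subnn expr0.
by rewrite -[hx q]mulr1 -xNyN mulrA comm_xN xNq mul0r.
Qed.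

Lemma mule_expx_eq0 u r : e * u = u ->
  (forall k, e * (x ^+ k * (r * u)) = 0) -> r * u = 0.
Proof.
move=> eu all0; have [M [q xMr]] := expx_mul_horner r.
have xMv : x ^+ M * (r * u) = q`_0 *: u.
  by rewrite mulrA xMr -{1}eu mulrA horner_mul_e -scalerAl eu.
have xMv0 : x ^+ M * (r * u) = 0 by rewrite -(all0 M) xMv -scalerAr eu.
rewrite (decompose_expx M (r * u)) xMv0 mulr0 add0r big1 // => i _.
by rewrite all0 mulr0.
Qed.

Lemma simple_principal_e t : e * t != 0 -> simple_lsub (principal (e * t)).
Proof.
set u := e * t => u0; have eu : e * u = u by rewrite mulrA mule_e.
split; first exact: principal_lideal.
split; first by exists u; split; [exists 1; rewrite mul1r | exact/eqP].
move=> T hT Tu; have [[v [Tv v0]] | T0] := classic (exists v, T v /\ v <> 0); last first.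
  by left=> a; split=> [Ta | ->]; [apply: NNPP => a0; apply: T0; exists a | exact: lideal0].
right; have [r vE] := Tu v Tv.
have [k ek0] : exists k, e * (x ^+ k * v) <> 0.
  apply: NNPP => all0; apply: v0; rewrite vE; apply: mule_expx_eq0 eu _ => k.
  by rewrite -vE; apply: NNPP => ek0; apply: all0; exists k.
have [c ekr] := mule_mul_e (x ^+ k * r).
have ekv : e * (x ^+ k * v) = c *: u.
  have -> : e * (x ^+ k * v) = e * (x ^+ k * r) * e * u by rewrite vE -{1}eu !mulrA.
  by rewrite ekr -scalerAl eu.
have c0 : c != 0 by apply: contra_notN ek0 => /eqP c0; rewrite ekv c0 scale0r.
have Tu' : T u.
  rewrite -[u](scale1r) -(mulVf c0) -scalerA -ekv.
  by apply: (lidealZ hT); do 2!apply: (lidealMl hT).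
by move=> a; split=> [/Tu // | [r' ->]]; exact: lidealMl.
Qed.

Lemma simple_generators_e ts : simple_generators [seq e * t | t <- ts].
Proof. by move=> _ /mapP[t _ ->]; exact: simple_principal_e. Qed.

Lemma lideal_peval_fin_gen (L : R -> Prop) p :
  is_left_ideal L -> p != 0 -> L (peval p x) -> fin_gen L.
Proof.
rewrite pevalE => hL p0 Lp.
have modp_le w : (size (w %% p)%R <= size p)%N by exact/ltnW/ltn_modpN0.
have [ws1 [ws1L span1]] :=
  subspace_fin_span_modp (is_subspace_preimage horner_additive horner_scalable hL)
    (fun w _ => modp_le w).
have [ws2 [ws2L span2]] :=
  subspace_fin_span_modp (is_subspace_preimage mule_horner_additive mule_horner_scalable hL)
    (fun w _ => modp_le w).
set G := hx p :: [seq hx w | w <- ws1] ++ [seq e * hx w | w <- ws2].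
have hG := lspan_lideal G; have Gp : lspan G (hx p) := lspan_mem (mem_head _ _).
have ws1G w : w \in ws1 -> lspan G (hx w).
  by move=> w1; apply: lspan_mem; rewrite !inE mem_cat map_f ?orbT.
have ws2G w : w \in ws2 -> lspan G (e * hx w).
  move=> w2; apply: lspan_mem.
  by rewrite !inE mem_cat (map_f (fun w => e * hx w)) ?orbT.
apply: (@fin_gen_lspan _ _ L G).
  move=> g; rewrite inE mem_cat.
  by case/or3P=> [/eqP -> | /mapP[w /ws1L ? ->] | /mapP[w /ws2L ? ->]].
apply: (lideal_sub_horner_parts hL hG) => q.
  move=> /span1 [v [r [vspan ->]]]; rewrite rmorphD rmorphM.
  apply: (lidealD hG); last exact: lidealMl.
  exact: (kspan_image horner_additive horner_scalable hG ws1G vspan).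
move=> /span2 [v [r [vspan ->]]]; rewrite rmorphD rmorphM mulrDr mulrA.
apply: (lidealD hG); last exact: lidealMl.
exact: (kspan_image mule_horner_additive mule_horner_scalable hG ws2G vspan).
Qed.

Lemma lideal_semisimple_or_fin_gen (L : R -> Prop) :
  is_left_ideal L -> semisimple L \/ fin_gen L.
Proof.
move=> hL; have [[p [p0 Lp]] | noL] := classic (exists p, p != 0 /\ L (hx p)).
  by right; exact: lideal_peval_fin_gen Lp.
left=> m Lm; have [M [q xMm]] := expx_mul_horner m.
have xM0 : x ^+ M * m = 0.
  rewrite xMm; have [-> | q0] := eqVneq q 0; first exact: rmorph0.
  by exfalso; apply: noL; exists q; rewrite -xMm; split=> //; exact: lidealMl.
set ts := [seq x ^+ i * m | i <- iota 0 M].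
have GL : forall g, g \in [seq e * t | t <- ts] -> L g.
  by move=> _ /mapP[_ /mapP[i _ ->] ->]; do 2!apply: (lidealMl hL).
have Gm : lspan [seq e * t | t <- ts] m.
  rewrite (decompose_expx M m) xM0 mulr0 add0r.
  apply: (lideal_sum (lspan_lideal _)) => i _; apply: (lidealMl (lspan_lideal _)).
  by apply/lspan_mem/map_f/map_f; rewrite mem_iota add0n ltn_ord.
have [n [S [t [St ->]]]] := semisimple_lspan (@simple_generators_e ts) Gm.
exists n, S, t; split=> // i; have [Si [SG Sti]] := St i; do 2!split=> //.
by move=> a /SG; exact: lspan_min hL GL a.
Qed.

Lemma finite_length_sub_idealI (Sigma : R -> Prop) p : is_left_ideal Sigma ->
  subsetR Sigma (idealI x y) ->
  (forall h, Sigma h -> principal (peval p x) h -> h = 0) -> p != 0 ->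
  finite_length Sigma.
Proof.
rewrite pevalE => hS SI direct p0.
have [ws [wsS spanw]] := subspace_fin_span_modp
  (is_subspace_preimage mule_horner_additive mule_horner_scalable hS)
  (fun w _ => ltnW (ltn_modpN0 w p0)).
set G := [seq e * t | t <- [seq hx w | w <- ws]].
have hG := lspan_lideal G.
have GS : forall g, g \in G -> Sigma g by move=> _ /mapP[_ /mapP[w /wsS ? ->] ->].
suff -> : Sigma = lspan G by exact/finite_length_lspan/simple_generators_e.
apply/eqsetRP => m; split; last exact: lspan_min hS GS m.
apply: (lideal_sub_horner_parts hS hG) m => q Sq.
  by rewrite horner_idealI_eq0; [exact: lideal0 | exact: SI].
have [v [r [vspan qE]]] := spanw q Sq.
have ev_spans L :
    is_left_ideal L -> (forall w, w \in ws -> L (e * hx w)) -> L (e * hx v).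
  move=> hL wsL.
  exact: (kspan_image mule_horner_additive mule_horner_scalable hL wsL vspan).
suff -> : e * hx q = e * hx v.
  by apply: ev_spans => // w w_ws; apply/lspan_mem/map_f/map_f.
(* e q(x) - e v(x) = e r(x) p(x) lies in Sigma and in R p(x). *)
apply/eqP; rewrite -subr_eq0; apply/eqP/direct.
  by apply: (lidealB hS) => //; exact: ev_spans.
by exists (e * hx r); rewrite qE rmorphD rmorphM mulrDr addrAC subrr add0r mulrA.
Qed.
End Jacobson.

Theorem corollary1 (K : fieldType) (R : algType K) (x y : R) :
  x * y = 1 -> jacobson_basis x y ->
  (forall (Sigma : R -> Prop) (p : {poly K}),
     is_left_ideal Sigma -> subsetR Sigma (idealI x y) ->
     (forall h, Sigma h -> principal (peval p x) h -> h = 0) ->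
     p != 0 ->
     fin_gen (sumset Sigma (principal (peval p x))) /\ finite_length Sigma)
  /\ (forall L : R -> Prop, is_left_ideal L -> semisimple L \/ fin_gen L).
Proof.
move=> xy1 [spanning _]; split=> [Sigma p hS SI direct p0 | L hL].
  split; last exact: (finite_length_sub_idealI xy1 spanning hS SI direct p0).
  apply: (lideal_peval_fin_gen xy1 spanning _ p0).
    exact: sumset_lideal hS (principal_lideal _).
  exists 0, (peval p x); split; first exact: lideal0.
  by split; [exists 1; rewrite mul1r | rewrite add0r].
exact: (lideal_semisimple_or_fin_gen xy1 spanning hL).
Qed.
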